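(* Assume (H1), fix $\theta_0\in(0,2)$ and $x,y\in\mathbb{R}^d$, and let $\zeta$ and $(X_t,Y_t)_{t\in[0,T)}$ be as in the context. Then almost surely, for every $s_0\in[0,T)$, $$\int_0^{s_0}\frac{|X_t-Y_t|^2}{\zeta^4(t)}dt+\frac{|X_{s_0}-Y_{s_0}|^2}{\theta_0\,\zeta^3(s_0)}\le\frac{|x-y|^2}{\theta_0\,\zeta^3(0)}.$$
   Context: Fix $T>0$, $H\in(1/2,1)$; $B^H$ is a $d$-dimensional fractional Brownian motion with Hurst parameter $H$. SDE: $dX_t=b(t,X_t)dt+\sigma(t)dB^H_t$, $X_0=x$, with $b:[0,T]\times\mathbb{R}^d\to\mathbb{R}^d$, $\sigma:[0,T]\to$ invertible $d\times d$ matrices. Assumption (H1): (i) there is $K>0$ with $|b(t,x)-b(t,y)|\le K|x-y|$ for all $t,x,y$, and $t\mapsto b(t,x)$ is Lipschitz for each $x$; (ii) $\sigma$ is bounded and $|\sigma^{-1}(t)-\sigma^{-1}(s)|\le\bar K|t-s|^{\alpha_0}$ for some $\bar K\ge0$, $\alpha_0\in(H-1/2,1]$. For $\theta_0\in(0,2)$ set $\zeta(t)=\frac{2-\theta_0}{2K}\big(1-e^{\frac23K(t-T)}\big)$, $t\in[0,T]$. $X$ solves the SDE with $X_0=x$, and $Y$ is the solution on $[0,T)$ of $dY_t=b(t,Y_t)dt+\sigma(t)dB^H_t+\frac{X_t-Y_t}{\zeta(t)}dt$, $Y_0=y$ (driven by the same $B^H$). *)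

From Stdlib Require Import Reals Lra List.
Open Scope R_scope.

(* Vectors of R^d are represented as functions nat -> R; only the
   coordinates i < d are meaningful. Matrices as nat -> nat -> R. *)
Definition vec := nat -> R.
Definition mat := nat -> nat -> R.

Definition vsub (u v : vec) : vec := fun i => u i - v i.

Definition sqnorm (d : nat) (v : vec) : R :=
  fold_right Rplus 0 (map (fun i => (v i) ^ 2) (seq 0 d)).

Definition norm (d : nat) (v : vec) : R := sqrt (sqnorm d v).

Definition frob (d : nat) (A : mat) : R :=
  sqrt (fold_right Rplus 0
          (map (fun i => fold_right Rplus 0
                   (map (fun j => (A i j) ^ 2) (seq 0 d))) (seq 0 d))).

Definition msub (A B : mat) : mat := fun i j => A i j - B i j.

Definition mmul (d : nat) (A B : mat) : mat :=
  fun i j => fold_right Rplus 0 (map (fun k => A i k * B k j) (seq 0 d)).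

Definition is_inverse (d : nat) (A B : mat) : Prop :=
  forall i j, (i < d)%nat -> (j < d)%nat ->
    mmul d A B i j = (if Nat.eqb i j then 1 else 0) /\
    mmul d B A i j = (if Nat.eqb i j then 1 else 0).

Definition zeta (K T theta0 t : R) : R :=
  (2 - theta0) / (2 * K) * (1 - exp (2 / 3 * K * (t - T))).

(** Put [Z := X - Y] and [D s := b(s, X s) - b(s, Y s)].  The noise enters [X]
    and [Y] identically, so each coordinate of [Z] solves the integral equation
      [Z t = Z 0 + \int_0^t (D s - Z s / zeta s) ds],   with [|D s| <= K |Z s|].
    The theorem says that the Lyapunov functional
      [F r = \int_0^r |Z|^2 / zeta^4 + |Z r|^2 / (theta0 zeta(r)^3)]
    is non-increasing on [[0, s0]].  Since [D] is merely integrable, [Z] is only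
    Lipschitz, so instead of differentiating [F] we bound its upper right Dini
    derivative ("right slope"):
    - a continuous function with nonpositive right slopes is non-increasing;
    - right-slope bounds add, multiply (for nonnegative factors), and come from
      derivatives and from primitives of right-continuous integrands;
    - energy estimate: [|Z|^2] has right slope at most [2 (K - 1/zeta) |Z|^2];
    - [zeta] solves exactly the ODE making the resulting slope of [F] vanish. *)

From Stdlib Require Import Reals List Lra Lia.
Open Scope R_scope.
From Coquelicot Require Coquelicot.

Module LyapunovEstimate.
Import Coquelicot.Coquelicot.

Definition sumL (l : list nat) (f : nat -> R) : R := fold_right Rplus 0 (map f l).

Lemma sumL_ext l f g : (forall i, In i l -> f i = g i) -> sumL l f = sumL l g.
Proof.
  unfold sumL; induction l as [|a l IH]; simpl; intros H; [reflexivity|].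
  rewrite H, IH by auto. reflexivity.
Qed.

Lemma sumL_ge0 l f : (forall i, In i l -> 0 <= f i) -> 0 <= sumL l f.
Proof.
  unfold sumL; induction l as [|a l IH]; simpl; intros H; [lra|].
  assert (0 <= f a) by auto. assert (0 <= fold_right Rplus 0 (map f l)) by auto. lra.
Qed.

Lemma sqnorm_ge0 d v : 0 <= sqnorm d v.
Proof. apply (sumL_ge0 (seq 0 d) (fun i => v i ^ 2)). intros; apply pow2_ge_0. Qed.

Lemma sqnorm_ext d (a c : vec) : (forall i, (i < d)%nat -> a i = c i) -> sqnorm d a = sqnorm d c.
Proof.
  intros E. apply (sumL_ext (seq 0 d) (fun i => a i ^ 2) (fun i => c i ^ 2)).
  intros i Hi. apply in_seq in Hi. rewrite E by lia. reflexivity.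
Qed.

Definition continuous_within (D : R -> Prop) (f : R -> R) (t : R) : Prop :=
  limit1_in f D (f t) t.

Lemma continuous_withinP D f t : continuous_within D f t <->
  forall eta, 0 < eta -> exists del, 0 < del /\
    forall r, D r -> Rabs (r - t) < del -> Rabs (f r - f t) < eta.
Proof.
  split; intros H eta He; destruct (H eta He) as [del [Hdel Hf]];
    exists del; split; auto.
  - intros r Dr Hr. exact (Hf r (conj Dr Hr)).
  - intros r [Dr Hr]. exact (Hf r Dr Hr).
Qed.

Lemma continuous_within_const D c t : continuous_within D (fun _ => c) t.
Proof.
  apply continuous_withinP. intros eta He. exists 1. split; [lra|].
  intros. rewrite Rminus_eq_0, Rabs_R0. exact He.
Qed.

Lemma continuous_within_pt D f t : continuity_pt f t -> continuous_within D f t.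
Proof.
  intros H. apply continuous_withinP. intros eta He.
  destruct (H eta He) as [del [Hdel Hf]]. exists del. split; [exact Hdel|].
  intros r _ Hr. destruct (Req_dec t r) as [<-|Hne].
  - rewrite Rminus_eq_0, Rabs_R0. exact He.
  - exact (Hf r (conj (conj I Hne) Hr)).
Qed.

Lemma continuous_within_ext D f g t : (forall r, D r -> f r = g r) -> D t ->
  continuous_within D g t -> continuous_within D f t.
Proof.
  intros E Dt H. apply continuous_withinP. intros eta He.
  destruct (proj1 (continuous_withinP _ _ _) H eta He) as [del [Hdel Hg]].
  exists del. split; [exact Hdel|]. intros r Dr Hr. rewrite !E by assumption. auto.
Qed.

Lemma continuous_within_sqsum D d (V : R -> vec) t :
  (forall i, (i < d)%nat -> continuous_within D (fun r => V r i) t) ->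
  continuous_within D (fun r => sqnorm d (V r)) t.
Proof.
  intros HV. unfold sqnorm.
  assert (Hl : forall i, In i (seq 0 d) -> continuous_within D (fun r => V r i) t)
    by (intros i Hi; apply HV; apply in_seq in Hi; lia).
  clear HV. induction (seq 0 d) as [|i l IH]; simpl.
  - apply continuous_within_const.
  - apply limit_plus; [|apply IH; intros; apply Hl; simpl; auto].
    assert (Hi : continuous_within D (fun r => V r i) t) by (apply Hl; simpl; auto).
    pose proof (limit_mul _ _ _ _ _ _ Hi Hi) as Hsq.
    intros eta He. destruct (Hsq eta He) as [del [Hdel Hf]].
    exists del. split; [exact Hdel|]. intros r Hr.
    simpl. rewrite !Rmult_1_r. exact (Hf r Hr).
Qed.

(** [f] has upper right Dini derivative at most [c] at [t], looking right up to [b]. *)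
Definition right_slope_le (b : R) (f : R -> R) (t c : R) : Prop :=
  forall eps, 0 < eps -> exists del, 0 < del /\
    forall t', t < t' < t + del -> t' <= b -> f t' - f t <= (c + eps) * (t' - t).

Lemma right_slope_le_plus b f g t cf cg :
  right_slope_le b f t cf -> right_slope_le b g t cg ->
  right_slope_le b (fun r => f r + g r) t (cf + cg).
Proof.
  intros Hf Hg eps He.
  destruct (Hf (eps / 2) ltac:(lra)) as [d1 [Hd1 H1]].
  destruct (Hg (eps / 2) ltac:(lra)) as [d2 [Hd2 H2]].
  exists (Rmin d1 d2). split; [apply Rmin_glb_lt; lra|].
  intros t' Ht' Hb. pose proof (Rmin_l d1 d2). pose proof (Rmin_r d1 d2).
  pose proof (H1 t' ltac:(lra) Hb). pose proof (H2 t' ltac:(lra) Hb).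
  assert ((cf + eps / 2) * (t' - t) + (cg + eps / 2) * (t' - t)
          = (cf + cg + eps) * (t' - t)) by field.
  lra.
Qed.

(** Increment of a product [f g] between [t] and [t' = t + h], given increments
    of the factors; [e1], [e2] are the tolerances used in [right_slope_le_mult]. *)
Lemma product_increment_le f0 f1 g0 g1 cf cg e1 e2 h eps : 0 < h -> 0 <= f1 -> 0 <= g0 ->
  e1 <= 1 -> Rabs (f1 - f0) < e1 ->
  e1 * (Rabs cg + Rabs f0 + 1) <= eps / 2 -> g0 * e2 <= eps / 2 ->
  f1 - f0 <= (cf + e2) * h -> g1 - g0 <= (cg + e1) * h ->
  f1 * g1 - f0 * g0 <= (f0 * cg + g0 * cf + eps) * h.
Proof.
  intros Hh Hf1 Hg0 He1 Hdf HM He2 Ef Eg.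
  pose proof (Rabs_pos cg). pose proof (Rle_abs f0). pose proof (Rabs_pos f0).
  apply Rabs_def2 in Hdf.
  assert (E1 : f1 * (g1 - g0) <= f1 * ((cg + e1) * h)) by (apply Rmult_le_compat_l; lra).
  assert (E2 : g0 * (f1 - f0) <= g0 * ((cf + e2) * h)) by (apply Rmult_le_compat_l; lra).
  assert (E3 : f1 * (cg + e1) <= f0 * cg + eps / 2).
  { assert ((f1 - f0) * cg <= e1 * Rabs cg).
    { apply Rle_trans with (Rabs ((f1 - f0) * cg)); [apply Rle_abs|].
      rewrite Rabs_mult. apply Rmult_le_compat_r; [lra|apply Rabs_le; lra]. }
    assert (f1 * e1 <= (Rabs f0 + 1) * e1) by (apply Rmult_le_compat_r; lra).
    nra. }
  assert (E4 : f1 * (cg + e1) * h <= (f0 * cg + eps / 2) * h)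
    by (apply Rmult_le_compat_r; lra).
  nra.
Qed.

Lemma right_slope_le_mult b f g t cf cg :
  continuous_within (fun r => t <= r <= b) f t ->
  (forall r, t <= r <= b -> 0 <= f r) -> 0 <= g t ->
  right_slope_le b f t cf -> right_slope_le b g t cg ->
  right_slope_le b (fun r => f r * g r) t (f t * cg + g t * cf).
Proof.
  intros Hc Hpos Hg0 Hf Hg eps He.
  set (M := Rabs cg + Rabs (f t) + 1).
  assert (HM : 0 < M)
    by (unfold M; pose proof (Rabs_pos cg); pose proof (Rabs_pos (f t)); lra).
  set (e1 := Rmin 1 (eps / (2 * M))).
  set (e2 := eps / (2 * (g t + 1))).
  assert (He1 : 0 < e1) by (apply Rmin_glb_lt; [lra|apply Rdiv_lt_0_compat; lra]).
  assert (He1' : e1 * M <= eps / 2).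
  { apply Rle_trans with (eps / (2 * M) * M); [apply Rmult_le_compat_r; [lra|apply Rmin_r]|].
    right. field. lra. }
  assert (He2 : 0 < e2) by (apply Rdiv_lt_0_compat; lra).
  assert (He2' : g t * e2 <= eps / 2).
  { apply Rle_trans with ((g t + 1) * e2); [apply Rmult_le_compat_r; lra|].
    right. unfold e2. field. lra. }
  destruct (proj1 (continuous_withinP _ _ _) Hc e1 He1) as [d0 [Hd0 Hc0]].
  destruct (Hf e2 He2) as [d1 [Hd1 H1]].
  destruct (Hg e1 He1) as [d2 [Hd2 H2]].
  exists (Rmin d0 (Rmin d1 d2)). split; [repeat apply Rmin_glb_lt; lra|].
  intros t' Ht' Hb.
  pose proof (Rmin_l d0 (Rmin d1 d2)). pose proof (Rmin_r d0 (Rmin d1 d2)).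
  pose proof (Rmin_l d1 d2). pose proof (Rmin_r d1 d2).
  apply (product_increment_le (f t) (f t') (g t) (g t') cf cg e1 e2).
  - lra.
  - apply Hpos. lra.
  - exact Hg0.
  - apply Rmin_l.
  - apply Hc0; [lra|]. rewrite Rabs_right; lra.
  - exact He1'.
  - exact He2'.
  - apply H1; lra.
  - apply H2; lra.
Qed.

Lemma right_slope_le_derive b f t l :
  derivable_pt_lim f t l -> right_slope_le b f t l.
Proof.
  intros Hd eps He. destruct (Hd eps He) as [del Hdel].
  exists del. split; [apply cond_pos|]. intros t' Ht' _.
  assert (Hh : t' - t <> 0) by lra.
  assert (Habs : Rabs (t' - t) < del) by (rewrite Rabs_right; lra).
  pose proof (Hdel (t' - t) Hh Habs) as Hq.
  replace (t + (t' - t)) with t' in Hq by ring.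
  apply Rabs_def2 in Hq.
  assert (Hq' : (f t' - f t) / (t' - t) < l + eps) by lra.
  apply (Rmult_lt_compat_r (t' - t)) in Hq'; [|lra].
  replace ((f t' - f t) / (t' - t) * (t' - t)) with (f t' - f t) in Hq' by (field; lra).
  lra.
Qed.

(** Monotonicity principle, quantitative form: if [G] is continuous on [[a, b]]
    and has nonpositive right slopes on [[a, b)], then [G b <= G a + eps (b - a)]
    for every [eps > 0].  Proof by a supremum (continuous induction) argument. *)
Lemma nonincreasing_eps (G : R -> R) a b eps : a <= b -> 0 < eps ->
  (forall c, a <= c <= b -> continuous_within (fun r => a <= r <= b) G c) ->
  (forall t, a <= t < b -> right_slope_le b G t 0) ->
  G b <= G a + eps * (b - a).
Proof.
  intros Hab He Hc Hl.
  set (S := fun r => a <= r <= b /\ G r <= G a + eps * (r - a)).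
  assert (Hbound : bound S) by (exists b; intros r [Hr _]; lra).
  assert (Hne : exists r, S r) by (exists a; split; lra).
  destruct (completeness S Hbound Hne) as [c [Hub Hlub]].
  assert (Hac : a <= c) by (apply Hub; split; lra).
  assert (Hcb : c <= b) by (apply Hlub; intros r [Hr _]; lra).
  (* the supremum [c] itself belongs to [S], by left continuity *)
  assert (HSc : G c <= G a + eps * (c - a)).
  { apply Rnot_lt_le. intros Hlt.
    set (gap := G c - G a - eps * (c - a)).
    destruct (proj1 (continuous_withinP _ _ _) (Hc c (conj Hac Hcb)) (gap / 2)
                ltac:(unfold gap; lra)) as [d1 [Hd1 Hd1']].
    assert (Hup : is_upper_bound S (c - d1)).
    { intros r [Hr Gr]. apply Rnot_lt_le. intros Hrc.
      assert (r <= c) by (apply Hub; split; auto).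
      assert (Hx : Rabs (G r - G c) < gap / 2)
        by (apply Hd1'; [exact Hr|rewrite Rabs_left1; lra]).
      apply Rabs_def2 in Hx.
      assert (eps * (r - a) = eps * (c - a) - eps * (c - r)) by ring.
      assert (0 <= eps * (c - r)) by (apply Rmult_le_pos; lra).
      unfold gap in *. lra. }
    pose proof (Hlub _ Hup). lra. }
  (* and [c = b], since otherwise [S] would extend to the right of [c] *)
  destruct (Req_dec c b) as [<-|Hcb']; [exact HSc|].
  exfalso. destruct (Hl c ltac:(lra) eps He) as [del [Hdel Hdel']].
  set (t' := Rmin (c + del / 2) b).
  assert (Ht1 : c < t') by (unfold t'; apply Rmin_glb_lt; lra).
  assert (Ht2 : t' < c + del) by (unfold t'; pose proof (Rmin_l (c + del / 2) b); lra).
  assert (Ht3 : t' <= b) by apply Rmin_r.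
  pose proof (Hdel' t' (conj Ht1 Ht2) Ht3) as Hstep.
  assert (HSt' : S t').
  { split; [lra|].
    assert ((0 + eps) * (t' - c) + eps * (c - a) = eps * (t' - a)) by ring. lra. }
  pose proof (Hub t' HSt'). lra.
Qed.

Lemma nonincreasing (G : R -> R) a b : a <= b ->
  (forall c, a <= c <= b -> continuous_within (fun r => a <= r <= b) G c) ->
  (forall t, a <= t < b -> right_slope_le b G t 0) ->
  G b <= G a.
Proof.
  intros Hab Hc Hl. apply Rnot_lt_le. intros Hlt.
  set (eps := (G b - G a) / (b - a + 1)).
  assert (He : 0 < eps) by (apply Rdiv_lt_0_compat; lra).
  pose proof (nonincreasing_eps G a b eps Hab He Hc Hl).
  assert (eps * (b - a + 1) = G b - G a) by (unfold eps; field; lra).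
  nra.
Qed.

Lemma ex_RInt_inside (f : R -> R) a b r s :
  ex_RInt f a b -> a <= r <= b -> a <= s <= b -> ex_RInt f r s.
Proof.
  intros H Hr Hs.
  assert (Hle : forall r s, a <= r <= s -> s <= b -> ex_RInt f r s).
  { intros r0 s0 H1 H2. apply (ex_RInt_Chasles_2 f a r0 s0); [lra|].
    apply (ex_RInt_Chasles_1 f a s0 b); [lra|exact H]. }
  destruct (Rle_dec r s); [apply Hle; lra|apply ex_RInt_swap; apply Hle; lra].
Qed.

Lemma RInt_diff (f : R -> R) a b r s : ex_RInt f a b -> a <= r <= b -> a <= s <= b ->
  RInt f a r - RInt f a s = RInt f s r.
Proof.
  intros H Hr Hs. rewrite <- (RInt_Chasles f a s r).
  - change (plus (RInt f a s) (RInt f s r)) with (RInt f a s + RInt f s r). ring.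
  - apply (ex_RInt_inside f a b); auto; lra.
  - apply (ex_RInt_inside f a b); auto; lra.
Qed.

(** A primitive of an integrable function is Lipschitz, hence continuous. *)
Lemma RInt_primitive_continuous (f : R -> R) a b c : ex_RInt f a b -> a <= c <= b ->
  continuous_within (fun r => a <= r <= b) (fun r => RInt f a r) c.
Proof.
  intros H Hc. destruct (ex_RInt_ub f a b H) as [M HM].
  set (L := Rabs M + 1). assert (HL : 0 < L) by (unfold L; pose proof (Rabs_pos M); lra).
  apply continuous_withinP. intros eta He. exists (eta / L).
  split; [apply Rdiv_lt_0_compat; lra|]. intros r Hr Hrc.
  rewrite (RInt_diff f a b r c) by auto.
  apply Rle_lt_trans with (Rabs (r - c) * L).
  - apply (norm_RInt_le_const_abs f c r (RInt f c r) L).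
    + intros x Hx. apply Rle_trans with M; [|unfold L; pose proof (Rle_abs M); lra].
      apply HM. rewrite Rmin_left, Rmax_right by lra.
      split; [apply Rle_trans with (Rmin c r)|apply Rle_trans with (Rmax c r)];
        try lra; [apply Rmin_glb|apply Rmax_lub]; lra.
    + apply (RInt_correct (V := R_CompleteNormedModule)), (ex_RInt_inside f a b);
        [exact H|lra|lra].
  - apply Rlt_le_trans with (eta / L * L); [apply Rmult_lt_compat_r; lra|].
    right. field. lra.
Qed.

(** A function continuous on [a, b] (relative to [a, b]) is integrable there:
    compose it with the clamping map onto [a, b] to get a continuous function. *)
Lemma ex_RInt_continuous_within (f : R -> R) a b : a <= b ->
  (forall c, a <= c <= b -> continuous_within (fun r => a <= r <= b) f c) ->
  ex_RInt f a b.
Proof.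
  intros Hab Hc.
  set (clamp := fun r => Rmax a (Rmin b r)).
  assert (Hclamp : forall c r, a <= c <= b ->
            a <= clamp r <= b /\ Rabs (clamp r - c) <= Rabs (r - c)).
  { intros c r Hcr. unfold clamp, Rmax, Rmin.
    repeat destruct Rle_dec; split; try lra; unfold Rabs;
      repeat destruct Rcase_abs; lra. }
  apply (ex_RInt_ext (fun r => f (clamp r))).
  { intros r Hr. rewrite Rmin_left, Rmax_right in Hr by lra.
    unfold clamp. rewrite Rmin_right, Rmax_right by lra. reflexivity. }
  apply (ex_RInt_continuous (V := R_CompleteNormedModule)).
  rewrite Rmin_left, Rmax_right by lra. intros c Hc'.
  apply continuity_pt_filterlim. intros eta He.
  destruct (proj1 (continuous_withinP _ _ _) (Hc c Hc') eta He) as [del [Hdel Hf]].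
  exists del. split; [exact Hdel|]. intros r [_ Hr]. simpl in *. unfold R_dist in *.
  destruct (Hclamp c r Hc') as [Hin Hdist].
  assert (Ec : clamp c = c) by (unfold clamp; rewrite Rmin_right, Rmax_right; lra).
  rewrite Ec. apply Hf; [exact Hin|lra].
Qed.

Lemma RInt_right_slope (f : R -> R) a b t : ex_RInt f a b -> a <= t < b ->
  continuous_within (fun r => a <= r <= b) f t ->
  right_slope_le b (fun r => RInt f a r) t (f t).
Proof.
  intros H Ht Hc eps He.
  destruct (proj1 (continuous_withinP _ _ _) Hc eps He) as [del [Hdel Hf]].
  exists del. split; [exact Hdel|]. intros t' Ht' Hb.
  rewrite (RInt_diff f a b t' t) by (exact H || lra).
  apply Rle_trans with (RInt (fun _ => f t + eps) t t').
  - apply RInt_le; [lra|apply (ex_RInt_inside f a b); [exact H|lra|lra]|apply ex_RInt_const|].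
    intros x Hx. assert (Hfx : Rabs (f x - f t) < eps)
      by (apply Hf; [lra|rewrite Rabs_right; lra]).
    apply Rabs_def2 in Hfx. lra.
  - rewrite RInt_const. right.
    change (scal (t' - t) (f t + eps)) with ((t' - t) * (f t + eps)). ring.
Qed.

Lemma RInt_pairing (l : list nat) (a : vec) (g : nat -> R -> R) r s :
  (forall i, In i l -> ex_RInt (g i) r s) ->
  ex_RInt (fun x => sumL l (fun i => a i * g i x)) r s /\
  RInt (fun x => sumL l (fun i => a i * g i x)) r s = sumL l (fun i => a i * RInt (g i) r s).
Proof.
  induction l as [|c l IH]; intros H.
  - unfold sumL; simpl. split; [apply ex_RInt_const|].
    rewrite RInt_const. change (scal (s - r) 0) with ((s - r) * 0). ring.
  - destruct IH as [IH1 IH2]; [intros; apply H; simpl; auto|].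
    assert (Hc : ex_RInt (fun x => a c * g c x) r s)
      by (apply (ex_RInt_scal (V := R_NormedModule)); apply H; simpl; auto).
    split.
    + apply (ex_RInt_plus (fun x => a c * g c x) (fun x => sumL l (fun i => a i * g i x)));
        assumption.
    + change (RInt (fun x => plus (a c * g c x) (sumL l (fun i => a i * g i x))) r s =
              a c * RInt (g c) r s + sumL l (fun i => a i * RInt (g i) r s)).
      rewrite (RInt_plus (fun x => a c * g c x)) by assumption.
      assert (Hsc : RInt (fun x => a c * g c x) r s = a c * RInt (g c) r s)
        by exact (RInt_scal (V := R_CompleteNormedModule) (g c) r s (a c) (H c (in_eq c l))).
      rewrite IH2, Hsc. reflexivity.
Qed.

Definition inner (d : nat) (a c : vec) : R := sumL (seq 0 d) (fun i => a i * c i).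

(** [|a|^2 - |c|^2 <= 2 <a, a - c>]: convexity of the squared norm. *)
Lemma sqnorm_diff_le d (a c : vec) : sqnorm d a - sqnorm d c <= 2 * inner d a (vsub a c).
Proof.
  unfold sqnorm, inner, sumL, vsub. induction (seq 0 d) as [|i l IH]; simpl; [lra|].
  pose proof (pow2_ge_0 (a i - c i)).
  assert (2 * (a i * (a i - c i)) - (a i ^ 2 - c i ^ 2) = (a i - c i) ^ 2) by ring.
  simpl in *. lra.
Qed.

Lemma sqnorm_vsub_self d (a : vec) : sqnorm d (vsub a a) = 0.
Proof.
  unfold sqnorm, vsub. induction (seq 0 d) as [|i l IH]; simpl in *; [reflexivity|].
  rewrite IH. ring.
Qed.

(** One coordinate of the dissipation estimate: Young's inequality for [a Dv]
    and the polarization [2 a c = a^2 + c^2 - (a - c)^2], with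
    [(a - c)^2 <= 2 (a - z)^2 + 2 (c - z)^2]. *)
Lemma dissipation_coordinate K a Dv c z q : 0 < K -> 0 < q ->
  a * (Dv - c * q) <= K / 2 * a ^ 2 + / (2 * K) * Dv ^ 2
                      - q / 2 * (a ^ 2 + c ^ 2) + q * ((a - z) ^ 2 + (c - z) ^ 2).
Proof.
  intros HK Hq.
  assert (Hyoung : a * Dv <= K / 2 * a ^ 2 + / (2 * K) * Dv ^ 2).
  { assert (0 <= (K * a - Dv) ^ 2 / (2 * K))
      by (apply Rdiv_le_0_compat; [apply pow2_ge_0|lra]).
    assert ((K * a - Dv) ^ 2 / (2 * K) = K / 2 * a ^ 2 + / (2 * K) * Dv ^ 2 - a * Dv)
      by (field; lra).
    lra. }
  assert (0 <= q * ((a - z) + (c - z)) ^ 2) by (apply Rmult_le_pos; [lra|apply pow2_ge_0]).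
  assert (q * ((a - z) ^ 2 + (c - z) ^ 2) - q / 2 * (a ^ 2 + c ^ 2) + q * (a * c)
          = q * ((a - z) + (c - z)) ^ 2 / 2) by field.
  assert (a * (Dv - c * q) = a * Dv - q * (a * c)) by ring.
  lra.
Qed.

Lemma dissipation d K q (a Dv c z : vec) : 0 < K -> 0 < q ->
  sqnorm d Dv <= K ^ 2 * sqnorm d c ->
  inner d a (fun i => Dv i - c i * q)
  <= (K - q) / 2 * (sqnorm d a + sqnorm d c) + q * (sqnorm d (vsub a z) + sqnorm d (vsub c z)).
Proof.
  intros HK Hq HD.
  assert (Hsum : inner d a (fun i => Dv i - c i * q)
    <= K / 2 * sqnorm d a + / (2 * K) * sqnorm d Dv - q / 2 * (sqnorm d a + sqnorm d c)
       + q * (sqnorm d (vsub a z) + sqnorm d (vsub c z))).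
  { unfold inner, sqnorm, sumL, vsub.
    induction (seq 0 d) as [|i l IH]; cbn [fold_right map]; [lra|].
    pose proof (dissipation_coordinate K (a i) (Dv i) (c i) (z i) q HK Hq). lra. }
  assert (/ (2 * K) * sqnorm d Dv <= / (2 * K) * (K ^ 2 * sqnorm d c))
    by (apply Rmult_le_compat_l; [apply Rlt_le, Rinv_0_lt_compat; lra|exact HD]).
  assert (/ (2 * K) * (K ^ 2 * sqnorm d c) = K / 2 * sqnorm d c) by (field; lra).
  assert ((K - q) / 2 * (sqnorm d a + sqnorm d c)
          = K / 2 * sqnorm d a + K / 2 * sqnorm d c - q / 2 * (sqnorm d a + sqnorm d c))
    by field.
  lra.
Qed.

Lemma dissipation_rhs_near K q q0 ua uc u0 wa wc eta : 0 < K -> 0 < q -> 0 <= u0 ->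
  0 < eta <= 1 -> Rabs (ua - u0) < eta -> Rabs (uc - u0) < eta ->
  0 <= wa < eta -> 0 <= wc < eta -> Rabs (q - q0) < eta ->
  (K - q) / 2 * (ua + uc) + q * (wa + wc) <= (K - q0) * u0 + (K + u0 + 3 * q0 + 3) * eta.
Proof.
  intros HK Hq Hu He Ha Hc Hwa Hwc Hq0.
  apply Rabs_def2 in Ha. apply Rabs_def2 in Hc. apply Rabs_def2 in Hq0.
  set (m := (ua + uc) / 2).
  assert (Hm : Rabs (m - u0) <= eta) by (unfold m; apply Rabs_le; lra).
  assert (Hk : Rabs (K - q) <= K + q0 + 1) by (apply Rabs_le; lra).
  assert (A1 : (K - q) * (m - u0) <= (K + q0 + 1) * eta).
  { apply Rle_trans with (Rabs ((K - q) * (m - u0))); [apply Rle_abs|].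
    rewrite Rabs_mult. apply Rmult_le_compat; auto using Rabs_pos. }
  assert (A2 : (q0 - q) * u0 <= eta * u0) by (apply Rmult_le_compat_r; lra).
  assert (A3 : q * (wa + wc) <= (q0 + 1) * (2 * eta)) by (apply Rmult_le_compat; lra).
  assert ((K - q) / 2 * (ua + uc) = (K - q0) * u0 + (K - q) * (m - u0) + (q0 - q) * u0)
    by (unfold m; field).
  assert ((K + u0 + 3 * q0 + 3) * eta
          = (K + q0 + 1) * eta + eta * u0 + (q0 + 1) * (2 * eta)) by ring.
  lra.
Qed.

Section Energy.
Variables (d : nat) (K s0 : R) (Z D : R -> vec) (q : R -> R).
Let I r := 0 <= r <= s0.
Let g i s := D s i - Z s i * q s.
Hypothesis K_pos : 0 < K.
Hypothesis q_pos : forall s, I s -> 0 < q s.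
Hypothesis q_cont : forall s, I s -> continuous_within I q s.
Hypothesis D_lip : forall s, I s -> sqnorm d (D s) <= K ^ 2 * sqnorm d (Z s).
Hypothesis g_int : forall i, (i < d)%nat -> ex_RInt (g i) 0 s0.
Hypothesis Z_eq : forall t, I t -> forall i, (i < d)%nat -> Z t i = Z 0 i + RInt (g i) 0 t.

Lemma Z_continuous t i : I t -> (i < d)%nat -> continuous_within I (fun r => Z r i) t.
Proof.
  intros Ht Hi. apply (continuous_within_ext I _ (fun r => Z 0 i + RInt (g i) 0 r));
    [intros r Hr; apply Z_eq; assumption|exact Ht|].
  apply limit_plus; [apply continuous_within_const|].
  apply RInt_primitive_continuous; [apply g_int, Hi|exact Ht].
Qed.

Lemma Z_increment t t' : I t -> I t' ->
  ex_RInt (fun s => inner d (Z t') (fun i => g i s)) t t' /\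
  inner d (Z t') (vsub (Z t') (Z t)) = RInt (fun s => inner d (Z t') (fun i => g i s)) t t'.
Proof.
  intros Ht Ht'.
  assert (Hg : forall i, In i (seq 0 d) -> ex_RInt (g i) t t').
  { intros i Hi. apply in_seq in Hi. apply (ex_RInt_inside (g i) 0 s0);
      [apply g_int; lia|exact Ht|exact Ht']. }
  destruct (RInt_pairing (seq 0 d) (Z t') g t t' Hg) as [Hex Heq].
  split; [exact Hex|]. unfold inner. rewrite Heq.
  apply sumL_ext. intros i Hi. apply in_seq in Hi. unfold vsub.
  rewrite (Z_eq t' Ht' i), (Z_eq t Ht i) by lia.
  rewrite <- (RInt_diff (g i) 0 s0 t' t); [ring|apply g_int; lia|exact Ht'|exact Ht].
Qed.

(** Near [t], the paired integrand [<Z t', D s - q s Z s>] (for [t <= s <= t'])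
    is at most [(K - q t) |Z t|^2] up to [O(eta)]: combine [dissipation] with the
    continuity at [t] of [|Z|^2], [|Z - Z t|^2] and [q]. *)
Lemma energy_integrand_near t eta : 0 <= t < s0 -> 0 < eta <= 1 ->
  exists del, 0 < del /\ forall t' s, t < t' < t + del -> t' <= s0 -> t <= s <= t' ->
    inner d (Z t') (fun i => g i s)
    <= (K - q t) * sqnorm d (Z t) + (K + sqnorm d (Z t) + 3 * q t + 3) * eta.
Proof.
  intros Ht Heta.
  assert (It : I t) by (unfold I; lra).
  set (u := fun r => sqnorm d (Z r)).
  set (w := fun r => sqnorm d (vsub (Z r) (Z t))).
  assert (Hcu : continuous_within I u t)
    by (apply continuous_within_sqsum; intros i Hi; apply Z_continuous; assumption).
  assert (Hcw : continuous_within I w t).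
  { apply continuous_within_sqsum. intros i Hi.
    apply limit_minus; [apply Z_continuous; assumption|apply continuous_within_const]. }
  destruct (proj1 (continuous_withinP _ _ _) Hcu eta (proj1 Heta)) as [d1 [Hd1 Hu]].
  destruct (proj1 (continuous_withinP _ _ _) Hcw eta (proj1 Heta)) as [d2 [Hd2 Hw]].
  destruct (proj1 (continuous_withinP _ _ _) (q_cont t It) eta (proj1 Heta))
    as [d3 [Hd3 Hq]].
  exists (Rmin d1 (Rmin d2 d3)). split; [repeat apply Rmin_glb_lt; assumption|].
  intros t' s Ht' Hb Hs.
  pose proof (Rmin_l d1 (Rmin d2 d3)). pose proof (Rmin_r d1 (Rmin d2 d3)).
  pose proof (Rmin_l d2 d3). pose proof (Rmin_r d2 d3).
  assert (Hnear : forall r, t <= r <= t' ->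
            I r /\ Rabs (r - t) < d1 /\ Rabs (r - t) < d2 /\ Rabs (r - t) < d3)
    by (intros r Hr; rewrite Rabs_right by lra; unfold I; repeat split; lra).
  (* [w t = 0], so continuity makes [w] small near [t] *)
  assert (Hw0 : forall r, t <= r <= t' -> 0 <= w r < eta).
  { intros r Hr. destruct (Hnear r Hr) as [Ir [_ [Hrt _]]].
    pose proof (Hw r Ir Hrt) as Hwr. unfold w in Hwr at 2.
    rewrite sqnorm_vsub_self, Rminus_0_r in Hwr.
    split; [apply sqnorm_ge0|pose proof (Rle_abs (w r)); lra]. }
  destruct (Hnear s Hs) as [Is [Hsu [_ Hsq]]].
  destruct (Hnear t' ltac:(lra)) as [It' [Htu _]].
  eapply Rle_trans;
    [apply (dissipation d K (q s) (Z t') (D s) (Z s) (Z t) K_pos (q_pos s Is) (D_lip s Is))|].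
  exact (dissipation_rhs_near K (q s) (q t) (u t') (u s) (u t) (w t') (w s) eta
           K_pos (q_pos s Is) (sqnorm_ge0 d (Z t)) Heta (Hu t' It' Htu) (Hu s Is Hsu)
           (Hw0 t' ltac:(lra)) (Hw0 s Hs) (Hq s Is Hsq)).
Qed.

(** Energy estimate: [|Z t'|^2 - |Z t|^2 <= 2 <Z t', Z t' - Z t>] and the
    increment is the integral of the integrand bounded above. *)
Lemma energy_right_slope t : 0 <= t < s0 ->
  right_slope_le s0 (fun r => sqnorm d (Z r)) t (2 * ((K - q t) * sqnorm d (Z t))).
Proof.
  intros Ht eps He.
  assert (It : I t) by (unfold I; lra).
  set (C := K + sqnorm d (Z t) + 3 * q t + 3).
  assert (HC : 0 < C)
    by (unfold C; pose proof (q_pos t It); pose proof (sqnorm_ge0 d (Z t)); lra).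
  set (eta := Rmin 1 (eps / (2 * C))).
  assert (Heta : 0 < eta <= 1)
    by (split; [apply Rmin_glb_lt; [lra|apply Rdiv_lt_0_compat; lra]|apply Rmin_l]).
  assert (HetaC : 2 * (C * eta) <= eps).
  { apply Rle_trans with (2 * (C * (eps / (2 * C)))); [|right; field; lra].
    apply Rmult_le_compat_l; [lra|apply Rmult_le_compat_l; [lra|apply Rmin_r]]. }
  destruct (energy_integrand_near t eta Ht Heta) as [del [Hdel Hpt]].
  exists del. split; [exact Hdel|]. intros t' Ht' Hb.
  assert (It' : I t') by (unfold I; lra).
  destruct (Z_increment t t' It It') as [Hex Heq].
  assert (Hint : inner d (Z t') (vsub (Z t') (Z t))
                 <= (t' - t) * ((K - q t) * sqnorm d (Z t) + C * eta)).
  { rewrite Heq.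
    apply Rle_trans with (RInt (fun _ => (K - q t) * sqnorm d (Z t) + C * eta) t t').
    - apply RInt_le; [lra|exact Hex|apply ex_RInt_const|].
      intros s Hs. apply Hpt; lra.
    - rewrite RInt_const. right. reflexivity. }
  pose proof (sqnorm_diff_le d (Z t') (Z t)) as Hconv.
  assert (Hgap : 0 <= (eps - 2 * (C * eta)) * (t' - t)) by (apply Rmult_le_pos; lra).
  assert ((2 * ((K - q t) * sqnorm d (Z t)) + eps) * (t' - t)
          = 2 * ((t' - t) * ((K - q t) * sqnorm d (Z t) + C * eta))
            + (eps - 2 * (C * eta)) * (t' - t)) by ring.
  lra.
Qed.

End Energy.

Section Zeta.
Variables (K T th : R).
Hypotheses (K_pos : 0 < K) (th_range : 0 < th < 2).

Lemma exp_zeta_lt_1 t : t < T -> exp (2 / 3 * K * (t - T)) < 1.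
Proof. intros Ht. rewrite <- exp_0. apply exp_increasing. nra. Qed.

Lemma zeta_pos t : t < T -> 0 < zeta K T th t.
Proof.
  intros Ht. pose proof (exp_zeta_lt_1 t Ht). unfold zeta.
  apply Rmult_lt_0_compat; [apply Rdiv_lt_0_compat|]; lra.
Qed.

Lemma zeta_inv_pow_continuous n t : t < T ->
  continuity_pt (fun r => / (zeta K T th r ^ n)) t.
Proof.
  intros Ht. pose proof (zeta_pos t Ht) as Hz.
  apply continuity_pt_filterlim.
  apply (ex_derive_continuous (K := R_AbsRing) (V := R_NormedModule)
           (fun r => / (zeta K T th r ^ n)) t).
  unfold zeta in *.
  auto_derive. apply pow_nonzero. replace (t + - T) with (t - T) by ring. lra.
Qed.

Lemma lyapunov_weight_derive t : t < T ->
  derivable_pt_lim (fun r => / (th * zeta K T th r ^ 3)) t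
    ((2 - th) * exp (2 / 3 * K * (t - T)) / (th * zeta K T th t ^ 4)).
Proof.
  intros Ht. pose proof (exp_zeta_lt_1 t Ht).
  apply is_derive_Reals. unfold zeta.
  auto_derive; replace (t + - T) with (t - T) by ring;
    set (E := exp (2 / 3 * K * (t - T))) in *.
  - apply Rgt_not_eq. repeat apply Rmult_lt_0_compat; try lra; apply Rinv_0_lt_compat; lra.
  - field. repeat split; lra.
Qed.

(** [zeta] is chosen exactly so that the Lyapunov functional has zero slope
    along the comparison equation: [zeta^-4 + 2 phi (K - 1/zeta) + phi' = 0]
    for [phi = 1 / (th zeta^3)]. *)
Lemma zeta_balance t : t < T ->
  / zeta K T th t ^ 4 + 2 * / (th * zeta K T th t ^ 3) * (K - / zeta K T th t)
  + (2 - th) * exp (2 / 3 * K * (t - T)) / (th * zeta K T th t ^ 4) = 0.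
Proof.
  intros Ht. pose proof (exp_zeta_lt_1 t Ht). unfold zeta.
  set (E := exp (2 / 3 * K * (t - T))) in *. field. repeat split; lra.
Qed.

End Zeta.

Section Lyapunov.
Variables (d : nat) (K T th s0 : R) (Z D : R -> vec).
Hypotheses (K_pos : 0 < K) (th_range : 0 < th < 2) (s0_range : 0 <= s0 < T).
Let I r := 0 <= r <= s0.
Hypothesis D_lip : forall s, I s -> sqnorm d (D s) <= K ^ 2 * sqnorm d (Z s).
Hypothesis g_int : forall i, (i < d)%nat ->
  ex_RInt (fun s => D s i - Z s i * / zeta K T th s) 0 s0.
Hypothesis Z_eq : forall t, I t -> forall i, (i < d)%nat ->
  Z t i = Z 0 i + RInt (fun s => D s i - Z s i * / zeta K T th s) 0 t.

Let u r := sqnorm d (Z r).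
Let phi r := / (th * zeta K T th r ^ 3).
Let h r := u r / zeta K T th r ^ 4.
Let F r := RInt h 0 r + phi r * u r.

Lemma u_continuous c : I c -> continuous_within I u c.
Proof.
  intros Hc. apply continuous_within_sqsum. intros i Hi.
  exact (Z_continuous d s0 Z D (fun s => / zeta K T th s) g_int Z_eq c i Hc Hi).
Qed.

Lemma phi_continuous c : c < T -> continuity_pt phi c.
Proof.
  intros Hc. apply derivable_continuous_pt.
  exact (exist _ _ (lyapunov_weight_derive K T th K_pos th_range c Hc)).
Qed.

Lemma h_continuous c : I c -> continuous_within I h c.
Proof.
  intros Hc. unfold h, Rdiv. apply limit_mul; [apply u_continuous, Hc|].
  apply (continuous_within_pt I (fun r => / (zeta K T th r ^ 4))).
  apply zeta_inv_pow_continuous; auto. unfold I in Hc; lra.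
Qed.

Lemma h_integrable : ex_RInt h 0 s0.
Proof. apply ex_RInt_continuous_within; [lra|exact h_continuous]. Qed.

Lemma F_continuous c : I c -> continuous_within I F c.
Proof.
  intros Hc. apply limit_plus.
  - apply RInt_primitive_continuous; [apply h_integrable|exact Hc].
  - apply limit_mul; [|apply u_continuous, Hc].
    apply continuous_within_pt, phi_continuous. unfold I in Hc; lra.
Qed.

(** The slopes of the two terms of [F] cancel by [zeta_balance]. *)
Lemma F_right_slope t : 0 <= t < s0 -> right_slope_le s0 F t 0.
Proof.
  intros Ht. assert (It : I t) by (unfold I; lra).
  assert (Hbal := zeta_balance K T th K_pos th_range t ltac:(lra)).
  replace 0 with (h t + (phi t * (2 * ((K - / zeta K T th t) * u t))
                         + u t * ((2 - th) * exp (2 / 3 * K * (t - T))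
                                  / (th * zeta K T th t ^ 4)))).
  2: { unfold h, phi. unfold Rdiv at 1.
       transitivity (u t * (/ zeta K T th t ^ 4
                           + 2 * / (th * zeta K T th t ^ 3) * (K - / zeta K T th t)
                           + (2 - th) * exp (2 / 3 * K * (t - T))
                             / (th * zeta K T th t ^ 4))); [ring|].
       rewrite Hbal. ring. }
  apply (right_slope_le_plus s0 (fun r => RInt h 0 r) (fun r => phi r * u r)).
  - apply RInt_right_slope; [exact h_integrable|exact Ht|apply h_continuous, It].
  - apply right_slope_le_mult.
    + apply continuous_within_pt, phi_continuous. lra.
    + intros r Hr. apply Rlt_le, Rinv_0_lt_compat, Rmult_lt_0_compat; [lra|].
      apply pow_lt, zeta_pos; lra.
    + apply sqnorm_ge0.
    + apply right_slope_le_derive, lyapunov_weight_derive; lra.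
    + apply (energy_right_slope d K s0 Z D (fun s => / zeta K T th s)); try assumption.
      * intros s Hs. apply Rinv_0_lt_compat, zeta_pos; unfold I in Hs; lra.
      * intros s Hs. apply continuous_within_pt.
        apply (continuity_pt_ext (fun r => / (zeta K T th r ^ 1)));
          [intros r; simpl; f_equal; ring|].
        apply zeta_inv_pow_continuous; unfold I in Hs; lra.
Qed.

Lemma lyapunov_decay : ex_RInt h 0 s0 /\
  RInt h 0 s0 + u s0 / (th * zeta K T th s0 ^ 3) <= u 0 / (th * zeta K T th 0 ^ 3).
Proof.
  split; [exact h_integrable|].
  pose proof (nonincreasing F 0 s0 ltac:(lra) F_continuous F_right_slope) as Hdec.
  unfold F in Hdec. rewrite RInt_point in Hdec.
  change (@zero R_CompleteNormedModule) with 0 in Hdec.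
  unfold phi in Hdec. unfold Rdiv. lra.
Qed.

End Lyapunov.

Lemma integral_equation_at_0 (f : R -> R) (v v0 n : R) : n = 0 ->
  (exists pr : Riemann_integrable f 0 0, v = v0 + RiemannInt pr + n) -> v = v0.
Proof.
  intros Hn [pr E]. rewrite E, Hn, <- RInt_Reals, RInt_point.
  change (@zero R_CompleteNormedModule) with 0. ring.
Qed.

(** The noise cancels in [X - Y]: it solves the comparison equation with rate
    [1 / zeta], driven by [b(s, X s) - b(s, Y s)]. *)
Lemma coupling_difference d K T th (b : R -> vec -> vec) (N : R -> vec)
    (x y : vec) (X Y : R -> vec) t i :
  0 <= t < T -> (i < d)%nat ->
  (forall t, 0 <= t <= T -> forall i, (i < d)%nat ->
     exists pr : Riemann_integrable (fun s => b s (X s) i) 0 t,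
       X t i = x i + RiemannInt pr + N t i) ->
  (forall t, 0 <= t < T -> forall i, (i < d)%nat ->
     exists pr : Riemann_integrable
                   (fun s => b s (Y s) i + (X s i - Y s i) / zeta K T th s) 0 t,
       Y t i = y i + RiemannInt pr + N t i) ->
  let g := fun s => (b s (X s) i - b s (Y s) i) - (X s i - Y s i) * / zeta K T th s in
  ex_RInt g 0 t /\ X t i - Y t i = (x i - y i) + RInt g 0 t.
Proof.
  intros Ht Hi HX HY g.
  destruct (HX t ltac:(lra) i Hi) as [prX EX]. destruct (HY t Ht i Hi) as [prY EY].
  pose proof (ex_RInt_Reals_1 _ _ _ prX) as IX. pose proof (ex_RInt_Reals_1 _ _ _ prY) as IY.
  assert (Eg : forall s, g s = minus (b s (X s) i)
                                      (b s (Y s) i + (X s i - Y s i) / zeta K T th s))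
    by (intros s; unfold g, minus, plus, opp; simpl; unfold Rdiv; ring).
  assert (Hg : ex_RInt g 0 t).
  { apply (ex_RInt_ext (fun s => minus (b s (X s) i)
                                      (b s (Y s) i + (X s i - Y s i) / zeta K T th s)));
      [intros s _; symmetry; apply Eg|].
    apply (ex_RInt_minus (V := R_NormedModule)); assumption. }
  split; [exact Hg|].
  rewrite (RInt_ext _ _ _ _ (fun s _ => Eg s)).
  rewrite (RInt_minus (V := R_CompleteNormedModule)) by assumption.
  rewrite (RInt_Reals _ _ _ prX), (RInt_Reals _ _ _ prY), EX, EY.
  change (minus (RiemannInt prX) (RiemannInt prY)) with (RiemannInt prX - RiemannInt prY).
  ring.
Qed.

End LyapunovEstimate.

Lemma sqnorm_lipschitz d (v w : vec) K :
  norm d v <= K * norm d w -> sqnorm d v <= K ^ 2 * sqnorm d w.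
Proof.
  unfold norm. intros H.
  pose proof (LyapunovEstimate.sqnorm_ge0 d v). pose proof (LyapunovEstimate.sqnorm_ge0 d w).
  rewrite <- (sqrt_sqrt (sqnorm d v)), <- (sqrt_sqrt (sqnorm d w)) by assumption.
  pose proof (sqrt_pos (sqnorm d v)).
  replace (K ^ 2 * (sqrt (sqnorm d w) * sqrt (sqnorm d w)))
    with ((K * sqrt (sqnorm d w)) * (K * sqrt (sqnorm d w))) by ring.
  apply Rmult_le_compat; assumption.
Qed.

Theorem mainTheorem3
  (d : nat) (T H K Kbar alpha0 theta0 : R)
  (b : R -> vec -> vec) (sigma sigmainv : R -> mat)
  (N : R -> vec) (x y : vec) (X Y : R -> vec) :
  0 < T -> 1 / 2 < H < 1 ->
  (* (H1)(i) *)
  0 < K ->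
  (forall t u v, 0 <= t <= T ->
     norm d (vsub (b t u) (b t v)) <= K * norm d (vsub u v)) ->
  (forall u, exists L, forall t s, 0 <= t <= T -> 0 <= s <= T ->
     norm d (vsub (b t u) (b s u)) <= L * Rabs (t - s)) ->
  (* (H1)(ii) *)
  (exists M, forall t i j, 0 <= t <= T -> (i < d)%nat -> (j < d)%nat ->
     Rabs (sigma t i j) <= M) ->
  (forall t, 0 <= t <= T -> is_inverse d (sigma t) (sigmainv t)) ->
  0 <= Kbar -> H - 1 / 2 < alpha0 <= 1 ->
  (forall t s, 0 <= t <= T -> 0 <= s <= T ->
     frob d (msub (sigmainv t) (sigmainv s)) <= Kbar * Rpower (Rabs (t - s)) alpha0) ->
  0 < theta0 < 2 ->
  (* N t plays the role of the (pathwise) noise term int_0^t sigma(s) dB^H_s *)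
  (forall i, N 0 i = 0) ->
  (* X solves dX = b(t,X) dt + sigma dB^H, X_0 = x, on [0,T] *)
  (forall t, 0 <= t <= T -> forall i, (i < d)%nat ->
     exists pr : Riemann_integrable (fun s => b s (X s) i) 0 t,
       X t i = x i + RiemannInt pr + N t i) ->
  (* Y solves dY = b(t,Y) dt + sigma dB^H + (X-Y)/zeta dt, Y_0 = y, on [0,T) *)
  (forall t, 0 <= t < T -> forall i, (i < d)%nat ->
     exists pr : Riemann_integrable
                   (fun s => b s (Y s) i + (X s i - Y s i) / zeta K T theta0 s) 0 t,
       Y t i = y i + RiemannInt pr + N t i) ->
  forall s0, 0 <= s0 < T ->
  exists pr : Riemann_integrable
                (fun t => sqnorm d (vsub (X t) (Y t)) / (zeta K T theta0 t) ^ 4) 0 s0,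
    RiemannInt pr
    + sqnorm d (vsub (X s0) (Y s0)) / (theta0 * (zeta K T theta0 s0) ^ 3)
    <= sqnorm d (vsub x y) / (theta0 * (zeta K T theta0 0) ^ 3).
Proof.
  intros HT _ HK Hlip _ _ _ _ _ _ Hth HN HX HY s0 Hs0.
  set (Z := fun t => vsub (X t) (Y t)).
  set (D := fun s => vsub (b s (X s)) (b s (Y s))).
  assert (Z0 : forall i, (i < d)%nat -> Z 0 i = x i - y i).
  { intros i Hi. unfold Z, vsub.
    rewrite (LyapunovEstimate.integral_equation_at_0 _ _ _ _ (HN i) (HX 0 ltac:(lra) i Hi)),
            (LyapunovEstimate.integral_equation_at_0 _ _ _ _ (HN i) (HY 0 ltac:(lra) i Hi)).
    reflexivity. }
  pose proof (fun t Ht i Hi => LyapunovEstimate.coupling_difference d K T theta0 b N x y X Y t i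
                                 Ht Hi HX HY) as Hcoup.
  destruct (LyapunovEstimate.lyapunov_decay d K T theta0 s0 Z D HK Hth Hs0) as [Hex Hdecay].
  - intros s Hs. apply sqnorm_lipschitz, Hlip. lra.
  - intros i Hi. exact (proj1 (Hcoup s0 Hs0 i Hi)).
  - intros t Ht i Hi. rewrite Z0 by exact Hi. exact (proj2 (Hcoup t ltac:(lra) i Hi)).
  - exists (Coquelicot.RInt.ex_RInt_Reals_0 _ _ _ Hex). rewrite <- Coquelicot.RInt.RInt_Reals.
    rewrite <- (LyapunovEstimate.sqnorm_ext d (Z 0) (vsub x y) Z0). exact Hdecay.
Qed.
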